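(* For every $M\ge \frac52$, every deterministic semi-online algorithm with migration factor $M$ for scheduling on two hierarchical machines with known optimal makespan (bin stretching) has competitive ratio at least $1+\frac{2}{2M+3}=\frac{2M+5}{2M+3}$.
   Context: Model (two hierarchical machines with migration, bin stretching). Jobs $1,2,\dots,n$ arrive one by one ($n$ unknown in advance). Job $j$ has a size $p_j>0$ and a grade of service (GoS) $g_j\in\{1,2\}$; a job of GoS $1$ may only be processed on machine $m_1$, a job of GoS $2$ may be processed on $m_1$ or on $m_2$. The load of a machine is the total size of the jobs assigned to it, and the makespan is the maximum load. When job $j$ arrives, the algorithm must assign it to a machine, and at the same time it may reassign (migrate) previously arrived jobs to other machines (respecting the GoS constraints), provided that the total size of the migrated jobs is at most $M\cdot p_j$; $M\ge 0$ is the migration factor. Bin stretching: the optimal offline makespan of the complete input is known in advance to the algorithm (and scaled to $1$). The competitive ratio of an algorithm is the supremum over inputs of (algorithm's makespan)/(optimal makespan). *)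

From HB Require Import structures.
From mathcomp Require Import all_boot all_order all_algebra.
From mathcomp Require Import reals.
Set Implicit Arguments. Unset Strict Implicit. Unset Printing Implicit Defensive.
Import Order.TTheory GRing.Theory Num.Theory.
Local Open Scope ring_scope.

(* Grade of service: GoS1 jobs only on m1, GoS2 jobs on m1 or m2. *)
Inductive gos := GoS1 | GoS2.
Inductive machine := m1 | m2.

Definition allowed (g : gos) (m : machine) : bool :=
  match g, m with GoS1, m2 => false | _, _ => true end.

Definition same_machine (a b : machine) : bool :=
  match a, b with m1, m1 | m2, m2 => true | _, _ => false end.

Section Defs.
Variable R : realType.

(* A job: (size, grade of service). *)
Definition job := (R * gos)%type.
Definition dummy_job : job := (0, GoS2).

(* An assignment maps job indices (0-based arrival order) to machines;
   for a job sequence s only the indices < size s are relevant. *)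
Definition assignment := nat -> machine.

Definition feasible (s : seq job) (a : assignment) : Prop :=
  forall i, (i < size s)%N -> allowed (nth dummy_job s i).2 (a i).

Definition load (s : seq job) (a : assignment) (m : machine) : R :=
  \sum_(i < size s) (if same_machine (a i) m then (nth dummy_job s i).1 else 0).

Definition makespan (s : seq job) (a : assignment) : R :=
  Num.max (load s a m1) (load s a m2).

Definition opt_is (s : seq job) (v : R) : Prop :=
  (exists a, feasible s a /\ makespan s a = v) /\
  (forall a, feasible s a -> v <= makespan s a).

(* Admissible inputs of the bin stretching problem: positive sizes and
   optimal makespan (known in advance) scaled to 1. *)
Definition valid_input (s : seq job) : Prop :=
  (forall i, (i < size s)%N -> 0 < (nth dummy_job s i).1) /\ opt_is s 1.

(* A deterministic semi-online algorithm: after the arrival of the jobs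
   of the prefix p (the last of which is the newly arrived job), it outputs
   the assignment of all jobs of p. *)
Definition algorithm := seq job -> assignment.

Definition migrated (s : seq job) (k : nat) (a b : assignment) : R :=
  \sum_(i < k) (if same_machine (a i) (b i) then 0 else (nth dummy_job s i).1).

Definition run_ok (M : R) (A : algorithm) (s : seq job) : Prop :=
  forall k, (k < size s)%N ->
    feasible (take k.+1 s) (A (take k.+1 s)) /\
    migrated s k (A (take k s)) (A (take k.+1 s)) <= M * (nth dummy_job s k).1.

Definition migration_algorithm (M : R) (A : algorithm) : Prop :=
  forall s, valid_input s -> run_ok M A s.

Definition alg_makespan (A : algorithm) (s : seq job) : R := makespan s (A s).

End Defs.

From mathcomp Require Import all_boot all_order all_algebra.
From mathcomp Require Import reals ring lra zify.
Import Order.TTheory GRing.Theory Num.Theory.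
Set Implicit Arguments. Unset Strict Implicit. Unset Printing Implicit Defensive.
Local Open Scope ring_scope.

(* The adversary first releases two GoS2 jobs a < b with a + b > 1.  If the
   algorithm puts a on m1 and b on m2, it then releases a GoS2 job 1 - a,
   whose migration budget M (1 - a) is too small to move both a and b, followed
   by GoS1 jobs of total size 1 - b; the optimum pairs a with 1 - a and b with
   the GoS1 jobs.  Otherwise it releases GoS1 jobs of total size 1 - a, and the
   optimum puts a with them on m1 and b alone on m2.  The GoS1 jobs come in four
   pieces, each too small to pay for moving a or b, so the first two jobs stay
   where they are and every final schedule has makespan at least
   min (2 - b, 1 + a, 1 - a + b, a + b).  With d0 = 2 / (2M + 3), the choice
   a = 1 - d - d0, b = 1 - (d + d0) / 2 pushes this above 1 + d for every
   d < d0 while keeping M (1 - a) < a + b. *)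

Lemma same_machineP (x y : machine) : reflect (x = y) (same_machine x y).
Proof. by case: x; case: y; constructor. Qed.

Section Schedules.
Variable R : realType.
Implicit Types (s : seq (job R)) (X Y : assignment) (M : R) (A : algorithm R).

Local Notation size_of s i := (nth (dummy_job R) s i).1.
Local Notation gos_of s i := (nth (dummy_job R) s i).2.

Lemma load_nil X m : load (Nil (job R)) X m = 0.
Proof. by rewrite /load big_ord0. Qed.

Lemma load_cons (j : job R) s X m :
  load (j :: s) X m =
  (if same_machine (X 0%N) m then j.1 else 0) + load s (fun i => X i.+1) m.
Proof. by rewrite /load big_ord_recl. Qed.

Lemma load_total s X :
  load s X m1 + load s X m2 = \sum_(i < size s) size_of s i.
Proof.
by rewrite /load -big_split; apply: eq_bigr => i _; case: (X i); rewrite /= ?addr0 ?add0r.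
Qed.

Lemma makespan_ge_half_total s X :
  \sum_(i < size s) size_of s i <= 2 * makespan s X.
Proof.
have l1 : load s X m1 <= makespan s X by rewrite le_max lexx.
have l2 : load s X m2 <= makespan s X by rewrite le_max lexx orbT.
rewrite -(load_total s X); lra.
Qed.

Lemma feasible_GoS1 s X i :
  feasible s X -> (i < size s)%N -> gos_of s i = GoS1 -> X i = m1.
Proof. by move=> /[apply]; case: (gos_of s i) => //= + _; case: (X i). Qed.

Lemma migrated_ge_moved s k X Y i :
  (i < k)%N -> (forall j, (j < k)%N -> 0 <= size_of s j) ->
  X i <> Y i -> size_of s i <= migrated s k X Y.
Proof.
move=> ik pos XYi; rewrite /migrated (bigD1 (Ordinal ik)) //=.
case: same_machineP => // _; rewrite lerDl.
by apply: sumr_ge0 => j _; case: ifP => // _; apply: pos.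
Qed.

Lemma run_ok_large_stays M A s k i :
  run_ok M A s -> (k < size s)%N -> (i < k)%N ->
  (forall j, (j < k)%N -> 0 <= size_of s j) ->
  M * size_of s k < size_of s i ->
  A (take k.+1 s) i = A (take k s) i.
Proof.
move=> ok ks ik pos small.
case: (same_machineP (A (take k s) i) (A (take k.+1 s) i)) => [-> // | moved].
have := le_lt_trans (migrated_ge_moved ik pos moved) (le_lt_trans (ok k ks).2 small).
by rewrite ltxx.
Qed.

Lemma run_ok_frozen M A s k0 i :
  run_ok M A s -> (forall j, (j < size s)%N -> 0 <= size_of s j) ->
  (i < k0 <= size s)%N ->
  (forall k, (k0 <= k < size s)%N -> M * size_of s k < size_of s i) ->
  A s i = A (take k0 s) i.
Proof.
move=> ok pos /andP[ik0 k0s] small.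
suff frozen n : (k0 + n <= size s)%N -> A (take (k0 + n) s) i = A (take k0 s) i.
  by have := frozen (size s - k0)%N; rewrite (subnKC k0s) take_size; apply.
elim: n => [|n IH] le; first by rewrite addn0.
rewrite addnS (run_ok_large_stays ok) ?IH //; try lia.
- by move=> j lt; apply: pos; lia.
- by apply: small; lia.
Qed.

Lemma opt_is_one s X0 :
  feasible s X0 -> makespan s X0 <= 1 ->
  (forall X, feasible s X -> 1 <= makespan s X) -> opt_is s 1.
Proof. by move=> f0 le1 ge1; split=> //; exists X0; split=> //; apply/le_anti; rewrite le1 ge1. Qed.

Lemma run_ok_feasible M A s : run_ok M A s -> (0 < size s)%N -> feasible s (A s).
Proof.
move=> ok s0; have [] := ok (size s).-1; first by rewrite ltn_predL.
by rewrite prednK // take_size.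
Qed.

End Schedules.

Section Adversary.
Variable R : realType.
Implicit Types (a b t M : R) (A : algorithm R).

Definition first_jobs a b : seq (job R) := [:: (a, GoS2); (b, GoS2)].

Definition split_input a b : seq (job R) :=
  first_jobs a b ++ (1 - a, GoS2) :: nseq 4 ((1 - b) / 4, GoS1).

Definition nonsplit_input a b : seq (job R) :=
  first_jobs a b ++ nseq 4 ((1 - a) / 4, GoS1).

Lemma split_input_valid a b : 0 < a < 1 -> 0 < b < 1 -> valid_input (split_input a b).
Proof.
move=> /andP[a0 a1] /andP[b0 b1]; split.
  by case=> [|[|[|[|[|[|[|i]]]]]]] //= _; lra.
apply: (opt_is_one (X0 := fun i => if (i == 0) || (i == 2) then m2 else m1)%N).
- by case=> [|[|[|[|[|[|[|i]]]]]]].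
- by rewrite /makespan !load_cons !load_nil ge_max /=; apply/andP; split; lra.
move=> X _; have := makespan_ge_half_total (split_input a b) X.
rewrite /= !big_ord_recl big_ord0 /=; lra.
Qed.

Lemma nonsplit_input_valid a b :
  0 < a < b -> b < 1 -> 1 < a + b -> valid_input (nonsplit_input a b).
Proof.
move=> /andP[a0 ab] b1 ab1; split.
  by case=> [|[|[|[|[|[|i]]]]]] //= _; lra.
apply: (opt_is_one (X0 := fun i => if i == 1 then m2 else m1)%N).
- by case=> [|[|[|[|[|[|i]]]]]].
- by rewrite /makespan !load_cons !load_nil ge_max /=; apply/andP; split; lra.
move=> X feas; have tail i : (2 <= i < 6)%N -> X i = m1.
  by move=> /andP[lo hi]; apply: (feasible_GoS1 feas) => //; case: i lo hi => [|[|[|[|[|[|i]]]]]].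
rewrite /makespan !load_cons !load_nil (tail 2%N) ?(tail 3%N) ?(tail 4%N) ?(tail 5%N) //=.
by case: (X 0%N); case: (X 1%N); rewrite /= le_max; apply/orP; by [left; lra | right; lra].
Qed.

Lemma split_input_makespan M A a b t :
  migration_algorithm M A -> 0 < a < b -> b < 1 ->
  M * (1 - a) < a + b -> M * (1 - b) < 4 * a ->
  t < 2 - b -> t < 1 + a -> t < 1 - a + b -> t < a + b ->
  A (first_jobs a b) 0%N = m1 -> A (first_jobs a b) 1%N = m2 ->
  t < alg_makespan A (split_input a b).
Proof.
move=> alg /andP[a0 ab] b1 Mfirst Mtail t1 t2 t3 t4 A0 A1.
have valid : valid_input (split_input a b) by apply: split_input_valid; lra.
have ok := alg _ valid.
have frozen i : (i < 2)%N -> A (split_input a b) i = A (take 3 (split_input a b)) i.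
  move=> i2; apply: (run_ok_frozen ok); first by move=> j /valid.1/ltW.
    by case: i i2 => [|[|]].
  by case=> [|[|[|[|[|[|[|k]]]]]]] //= _; case: i i2 => [|[|]] //= _; lra.
have feas := run_ok_feasible ok isT.
have tail i : (3 <= i < 7)%N -> A (split_input a b) i = m1.
  by move=> /andP[lo hi]; apply: (feasible_GoS1 feas) => //; case: i lo hi => [|[|[|[|[|[|[|i]]]]]]].
set A3 := A (take 3 (split_input a b)).
have stay : A3 0%N = m1 \/ A3 1%N = m2.
  have := (ok 2%N isT).2.
  rewrite /migrated !big_ord_recl big_ord0 -/A3 (_ : take 2 _ = first_jobs a b) // A0 A1 /=.
  by case: (A3 0%N); case: (A3 1%N) => /= moved; [left | left | exfalso; lra | right].
rewrite /alg_makespan /makespan !load_cons !load_nil /= (tail 3%N) ?(tail 4%N) ?(tail 5%N) ?(tail 6%N) //.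
rewrite (frozen 0%N) ?(frozen 1%N) // -/A3.
case: stay => [-> | ->]; [case: (A3 1%N) | case: (A3 0%N)]; case: (A _ 2%N) => /=;
  rewrite lt_max; apply/orP; by [left; lra | right; lra].
Qed.

Lemma nonsplit_input_makespan M A a b t :
  migration_algorithm M A -> 0 < a < b -> b < 1 -> 1 < a + b ->
  M * (1 - a) < 4 * a -> t < 1 - a + b -> t < a + b ->
  A (first_jobs a b) 0%N = m2 \/ A (first_jobs a b) 1%N = m1 ->
  t < alg_makespan A (nonsplit_input a b).
Proof.
move=> alg ab0 b1 ab1 Mtail t1 t2 notsplit; have [a0 ab] := andP ab0.
have valid : valid_input (nonsplit_input a b) by exact: nonsplit_input_valid.
have ok := alg _ valid.
have frozen i : (i < 2)%N -> A (nonsplit_input a b) i = A (first_jobs a b) i.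
  move=> i2; apply: (run_ok_frozen (k0 := 2) ok); first by move=> j /valid.1/ltW.
    by case: i i2 => [|[|]].
  by case=> [|[|[|[|[|[|k]]]]]] //= _; case: i i2 => [|[|]] //= _; lra.
have feas := run_ok_feasible ok isT.
have tail i : (2 <= i < 6)%N -> A (nonsplit_input a b) i = m1.
  by move=> /andP[lo hi]; apply: (feasible_GoS1 feas) => //; case: i lo hi => [|[|[|[|[|[|i]]]]]].
rewrite /alg_makespan /makespan !load_cons !load_nil /= (tail 2%N) ?(tail 3%N) ?(tail 4%N) ?(tail 5%N) //.
rewrite (frozen 0%N) ?(frozen 1%N) //.
case: notsplit => [-> | ->]; [case: (A _ 1%N) | case: (A _ 0%N)] => /=;
  rewrite lt_max; apply/orP; by [left; lra | right; lra].
Qed.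

Lemma adversary_wins M A a b t :
  migration_algorithm M A -> 0 < a < b -> b < 1 -> 1 < a + b ->
  M * (1 - a) < a + b -> M * (1 - a) < 4 * a -> M * (1 - b) < 4 * a ->
  t < 2 - b -> t < 1 + a -> t < 1 - a + b -> t < a + b ->
  exists s, valid_input s /\ t < alg_makespan A s.
Proof.
move=> alg ab0 b1 ab1 Mfirst Mtail Mtail' t1 t2 t3 t4; have [a0 ab] := andP ab0.
have [[A0 A1] | notsplit] :
    (A (first_jobs a b) 0%N = m1 /\ A (first_jobs a b) 1%N = m2) \/
    (A (first_jobs a b) 0%N = m2 \/ A (first_jobs a b) 1%N = m1).
  by case: (A _ 0%N); case: (A _ 1%N); [right; right | left | right; left | right; left].
- exists (split_input a b); split; first by apply: split_input_valid; lra.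
  exact: (split_input_makespan alg).
- exists (nonsplit_input a b); split; first exact: nonsplit_input_valid.
  exact: (nonsplit_input_makespan alg).
Qed.

Lemma adversary_exceeds M A d0 d :
  5 / 2 <= M -> (2 * M + 3) * d0 = 2 -> d0 / 2 <= d < d0 ->
  migration_algorithm M A ->
  exists s, valid_input s /\ 1 + d < alg_makespan A s.
Proof.
move=> M52 Md0 /andP[dlo dhi] alg.
have d0_gt0 : 0 < d0 by lra.
have d0_le : d0 <= 1 / 4.
  have : 0 <= (M - 5 / 2) * d0 by apply: mulr_ge0; lra.
  lra.
have Md : M * d < M * d0 by rewrite ltr_pM2l //; lra.
set a := 1 - d - d0; set b := 1 - (d + d0) / 2.
by apply: (adversary_wins (a := a) (b := b) alg); rewrite /a /b; try apply/andP; try split; lra.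
Qed.

End Adversary.

Theorem mainTheorem4 (R : realType) (M : R) (A : algorithm R) :
  5 / 2 <= M ->
  migration_algorithm M A ->
  forall rho : R, rho < (2 * M + 5) / (2 * M + 3) ->
  exists s : seq (job R), valid_input s /\ rho < alg_makespan A s.
Proof.
move=> M52 alg rho rho_lt.
set d0 := 2 / (2 * M + 3).
have Md0 : (2 * M + 3) * d0 = 2 by rewrite mulrC divfK //; lra.
have d0_gt0 : 0 < d0 by rewrite divr_gt0 //; lra.
have ratio : (2 * M + 5) / (2 * M + 3) = 1 + d0 by rewrite /d0; field; lra.
rewrite ratio in rho_lt.
set r := Num.max rho 1.
have rho_r : rho <= r by rewrite le_max lexx.
have r1 : 1 <= r by rewrite le_max lexx orbT.
have r_lt : r < 1 + d0 by rewrite gt_max rho_lt /=; lra.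
have [|s [valid gap]] := adversary_exceeds (d := (r - 1 + d0) / 2) M52 Md0 _ alg.
  by apply/andP; split; lra.
by exists s; split=> //; apply: le_lt_trans gap; lra.
Qed.
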